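(* Let $(X,G)$ and $(Y,H)$ be free odometers with $G=H=\mathbb Z^d$. Let $\varphi:Y\to X$ be a homeomorphism implementing a continuous orbit equivalence between $(Y,H)$ and $(X,G)$, and let $f:H\times Y\to G$ be the corresponding orbit cocycle. Then there exist finite-index subgroups $G_0\subseteq G$ and $H_0\subseteq H$ with $[G:G_0]=[H:H_0]$, a clopen partition $\{C_0,\dots,C_{q-1}\}$ of $Y$ into $H_0$-invariant sets, and group isomorphisms $\theta_i:H_0\to G_0$, $i=0,\dots,q-1$, such that $f(h,y)=\theta_i(h)$ for every $h\in H_0$, $y\in C_i$ and $i=0,\dots,q-1$.
   Context: $G$-odometer: for a decreasing sequence $G_0\supseteq G_1\supseteq\cdots$ of finite-index subgroups of $G$, the inverse limit $\varprojlim(G/G_n,\pi_n)$ of coset spaces under the natural maps $\pi_n:G/G_n\to G/G_{n-1}$, with $G$ acting by translation coordinatewise. Free: $g\cdot x=x$ implies $g=e$. Continuous orbit equivalence: a homeomorphism $\varphi:Y\to X$ mapping $H$-orbits bijectively onto $G$-orbits, such that locally each group element of one group is conjugated by $\varphi$ to an element of the other on a clopen neighborhood (in both directions). Orbit cocycle: the map $f:H\times Y\to G$ defined by $f(h,y)\cdot\varphi(y)=\varphi(h\cdot y)$ (well defined by freeness). *)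

From HB Require Import structures.
From mathcomp Require Import all_boot all_order all_algebra.
Set Implicit Arguments. Unset Strict Implicit. Unset Printing Implicit Defensive.
Import Order.TTheory GRing.Theory Num.Theory.
Local Open Scope ring_scope.

Definition Zd (d : nat) := 'rV[int]_d.

Definition is_subgroup d (S : Zd d -> Prop) : Prop :=
  S 0 /\ (forall a b, S a -> S b -> S (a - b)).

Definition has_index d (S : Zd d -> Prop) (n : nat) : Prop :=
  exists r : 'I_n -> Zd d,
    (forall i j, S (r i - r j) -> i = j) /\ (forall g, exists i, S (g - r i)).

Definition finite_index d (S : Zd d -> Prop) : Prop := exists n, has_index S n.

Definition odo_seq d (Gs : nat -> Zd d -> Prop) : Prop :=
  (forall n, is_subgroup (Gs n) /\ finite_index (Gs n)) /\
  (forall n g, Gs n.+1 g -> Gs n g).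

Definition is_coset d (S : Zd d -> Prop) (C : Zd d -> Prop) : Prop :=
  exists g, forall z, C z <-> S (z - g).

(* Points of the inverse limit: compatible sequences of cosets
   (x_{n+1} is a coset of G_{n+1} contained in the coset x_n of G_n,
   i.e. pi_{n+1}(x_{n+1}) = x_n). *)
Definition is_point d (Gs : nat -> Zd d -> Prop) (x : nat -> Zd d -> Prop) : Prop :=
  (forall n, is_coset (Gs n) (x n)) /\ (forall n z, x n.+1 z -> x n z).

Definition odo d (Gs : nat -> Zd d -> Prop) := {x : nat -> Zd d -> Prop | is_point Gs x}.

Definition act_fun d (g : Zd d) (x : nat -> Zd d -> Prop) : nat -> Zd d -> Prop :=
  fun n z => x n (z - g).

Lemma act_fun_point d (Gs : nat -> Zd d -> Prop) g x :
  is_point Gs x -> is_point Gs (act_fun g x).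
Proof.
move=> [Hc Hs]; split; last by move=> n z; apply: Hs.
move=> n; have [g0 Hg0] := Hc n; exists (g + g0) => z.
rewrite /act_fun; have -> : z - (g + g0) = z - g - g0 by rewrite opprD addrA.
exact: Hg0.
Qed.

Definition act d (Gs : nat -> Zd d -> Prop) (g : Zd d) (x : odo Gs) : odo Gs :=
  exist _ (act_fun g (proj1_sig x)) (act_fun_point g (proj2_sig x)).

Definition free_action d (Gs : nat -> Zd d -> Prop) : Prop :=
  forall (g : Zd d) (x : odo Gs), act g x = x -> g = 0.

(* Inverse-limit topology: U is open iff around each of its points it
   contains a cylinder set {y | y_n = x_n}. *)
Definition is_open d (Gs : nat -> Zd d -> Prop) (U : odo Gs -> Prop) : Prop :=
  forall x, U x -> exists n, forall y,
    (forall z, proj1_sig y n z <-> proj1_sig x n z) -> U y.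

Definition is_clopen d (Gs : nat -> Zd d -> Prop) (U : odo Gs -> Prop) : Prop :=
  is_open U /\ is_open (fun x => ~ U x).

Definition continuous d (Gs Hs : nat -> Zd d -> Prop) (F : odo Hs -> odo Gs) : Prop :=
  forall U, is_open U -> is_open (fun y => U (F y)).

(* Continuous orbit equivalence implemented by phi : Y -> X,
   (Y,H) with H-odometer sequence Hs, (X,G) with sequence Gs. *)
Definition cont_orbit_equiv d (Gs Hs : nat -> Zd d -> Prop) (phi : odo Hs -> odo Gs) : Prop :=
  exists psi : odo Gs -> odo Hs,
    [/\ cancel phi psi, cancel psi phi, continuous phi & continuous psi] /\
    [/\
      (forall y x, (exists g, x = act g (phi y)) <-> (exists h, x = phi (act h y))),
      (forall (h : Zd d) y, exists U, [/\ is_clopen U, U y &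
          (exists g : Zd d, forall z, U z -> phi (act h z) = act g (phi z))]) &
      (forall (g : Zd d) x, exists V, [/\ is_clopen V, V x &
          (exists h : Zd d, forall w, V w -> psi (act g w) = act h (psi w))])].

Definition group_iso_on d (H0 G0 : Zd d -> Prop) (theta : Zd d -> Zd d) : Prop :=
  [/\ (forall a b, H0 a -> H0 b -> theta (a + b) = theta a + theta b),
      (forall a, H0 a -> G0 (theta a)),
      (forall a b, H0 a -> H0 b -> theta a = theta b -> a = b) &
      (forall c, G0 c -> exists2 a, H0 a & theta a = c)].

(* Since Z^d is abelian, the cocycle is constant on a whole finite-index
   subgroup, so a single piece (q = 1) suffices.  Compactness of the odometer
   gives one depth N such that every f(a, .) is constant on N-cylinders: first
   for the basis vectors, whose f(e_k, .) are locally constant by the local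
   conjugacy, then for all a by the cocycle identity.  For h in H_N the point
   h.y stays in the N-cylinder of y, so expanding f(h + a, y) = f(a + h, y)
   gives f(h, a.y) = f(h, y); as every N-cylinder meets every orbit, f(h, .)
   is constant.  Thus theta := f(., y0) is additive on H_N, and since it is a
   bijection of Z^d with theta(s + a) = theta s + theta a for s in H_N, the
   image theta(H_N) has the same index as H_N. *)
From HB Require Import structures.
From mathcomp Require Import all_boot all_order all_algebra.
From Stdlib Require Import ClassicalEpsilon FunctionalExtensionality.
From Stdlib Require Import PropExtensionality ProofIrrelevance Classical_Prop.
Import GRing.Theory.
Local Open Scope ring_scope.
Set Implicit Arguments.
Unset Strict Implicit.

Section Subgroups.
Variables (d : nat) (S : Zd d -> Prop).
Hypothesis hS : is_subgroup S.

Lemma subgroup0 : S 0. Proof. by case: hS. Qed.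

Lemma subgroupB a b : S a -> S b -> S (a - b). Proof. by case: hS => _; apply. Qed.

Lemma subgroupN a : S a -> S (- a).
Proof. by move=> Sa; rewrite -sub0r; apply: subgroupB subgroup0 Sa. Qed.

Lemma subgroupD a b : S a -> S b -> S (a + b).
Proof. by move=> Sa Sb; rewrite -[b]opprK; apply: subgroupB (subgroupN Sb). Qed.

Lemma subgroupMz a z : S a -> S (a *~ z).
Proof.
have Sn n : S a -> S (a *+ n).
  move=> Sa; elim: n => [|n IH]; first by rewrite mulr0n; exact: subgroup0.
  by rewrite mulrS; apply: subgroupD.
by case: z => n Sa; rewrite ?NegzE ?mulrNz; [apply: Sn | apply/subgroupN/Sn].
Qed.

Lemma subgroup_delta_full : (forall k, S (delta_mx 0 k)) -> forall a, S a.
Proof.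
move=> Sdelta a; rewrite (row_sum_delta a); apply: (big_ind S) => //.
- exact: subgroup0.
- exact: subgroupD.
- by move=> k _; rewrite -[a 0 k]intz scaler_int; exact: subgroupMz.
Qed.

Lemma coset_memE C c : is_coset S C -> C c -> forall z, C z <-> S (z - c).
Proof.
move=> [g Cg] Cc z; have Scg := (Cg c).1 Cc; rewrite Cg; split=> Sz.
  by have := subgroupB Sz Scg; rewrite opprB addrA subrK.
by have := subgroupD Sz Scg; rewrite addrA subrK.
Qed.

End Subgroups.

Section AdditiveOnSubgroup.
Variables (d : nat) (S : Zd d -> Prop) (F : Zd d -> Zd d).
Hypotheses (hS : is_subgroup S) (F_inj : injective F)
  (F_addl : forall s a, S s -> F (s + a) = F s + F a).

Definition image_on (g : Zd d) : Prop := exists2 s, S s & F s = g.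

Lemma additive_on0 : F 0 = 0.
Proof.
apply: (@addrI _ (F 0)); rewrite addr0 -F_addl ?add0r //; exact: subgroup0.
Qed.

Lemma additive_onB a b : S a -> S b -> F (a - b) = F a - F b.
Proof.
by move=> Sa Sb; rewrite -[in RHS](subrK b a) (F_addl b) ?addrK //; exact: subgroupB.
Qed.

Lemma image_on_subgroup : is_subgroup image_on.
Proof.
split; first by exists 0; [exact: subgroup0 | exact: additive_on0].
move=> _ _ [a Sa <-] [b Sb <-]; exists (a - b); first exact: subgroupB.
exact: additive_onB.
Qed.

Lemma group_iso_on_image : group_iso_on S image_on F.
Proof.
split=> [a b Sa _ | a Sa | a b _ _ /F_inj // | c [a Sa <-]].
- exact: F_addl.
- by exists a.
- by exists a.
Qed.

Lemma has_index_image n :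
  (forall g, exists a, F a = g) -> has_index S n -> has_index image_on n.
Proof.
move=> F_onto [r [r_sep r_cover]]; exists (F \o r); split=> [i j [s Ss] | g] /=.
  move=> Es; apply: r_sep; suff -> : r i = s + r j by rewrite addrK.
  by apply: F_inj; rewrite F_addl // Es subrK.
have [a <-] := F_onto g; have [i Sai] := r_cover a.
exists i, (a - r i) => //.
by rewrite -[in RHS](subrK (r i) a) (F_addl (r i)) ?addrK.
Qed.

End AdditiveOnSubgroup.

Section OdometerActions.
Variables (d : nat) (Hs : nat -> Zd d -> Prop).

Lemma odo_ext (x y : odo Hs) :
  (forall n z, proj1_sig x n z <-> proj1_sig y n z) -> x = y.
Proof.
case: x y => [x px] [y py] /= xy.
have ? : x = y.
  apply: functional_extensionality => n; apply: functional_extensionality => z.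
  exact: propositional_extensionality.
by subst y; congr exist; exact: proof_irrelevance.
Qed.

Lemma act_add a b (x : odo Hs) : act a (act b x) = act (a + b) x.
Proof. by apply: odo_ext => n z /=; rewrite /act_fun opprD addrA. Qed.

Lemma act0 (x : odo Hs) : act 0 x = x.
Proof. by apply: odo_ext => n z /=; rewrite /act_fun subr0. Qed.

Lemma act_inj (x : odo Hs) : free_action Hs -> injective (fun a => act a x).
Proof.
move=> free a b /= ab; apply/eqP; rewrite -subr_eq0; apply/eqP; apply: (free _ x).
by rewrite addrC -act_add ab act_add addNr act0.
Qed.

End OdometerActions.

Section OdometerTopology.
Variables (d : nat) (Hs : nat -> Zd d -> Prop).
Hypothesis hHs : odo_seq Hs.

Let Hs_subgroup n : is_subgroup (Hs n) := proj1 (proj1 hHs n).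

Definition cyl n (y y' : odo Hs) : Prop :=
  forall z, proj1_sig y n z <-> proj1_sig y' n z.

Lemma odo_mem (y : odo Hs) n : exists g, proj1_sig y n g.
Proof.
have [g yg] := (proj2_sig y).1 n; exists g; apply/yg; rewrite subrr.
exact: subgroup0.
Qed.

Lemma odo_memE (y : odo Hs) n c :
  proj1_sig y n c -> forall z, proj1_sig y n z <-> Hs n (z - c).
Proof. exact/coset_memE/(proj2_sig y).1. Qed.

Lemma cyl_le n M y y' : (n <= M)%N -> cyl M y y' -> cyl n y y'.
Proof.
move=> nM yy'.
have down (w : odo Hs) z : proj1_sig w M z -> proj1_sig w n z.
  elim: M nM {yy'} => [|M IH]; first by rewrite leqn0 => /eqP ->.
  rewrite leq_eqVlt => /orP [/eqP -> //|]; rewrite ltnS => nM wz.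
  exact/IH/(proj2_sig w).2.
have [g yg] := odo_mem y M; have y'g := (yy' g).1 yg.
by move=> z; rewrite (odo_memE (down _ _ yg)) (odo_memE (down _ _ y'g)).
Qed.

Lemma cyl_act n b y y' : cyl n y y' -> cyl n (act b y) (act b y').
Proof. by move=> yy' z; exact: yy'. Qed.

Lemma cyl_act_subgroup n h y : Hs n h -> cyl n (act h y) y.
Proof.
move=> Hh z /=; rewrite /act_fun; have [g yg] := odo_mem y n.
rewrite !(odo_memE yg) -addrA [- h + _]addrC addrA; split=> Hz.
  by rewrite -[_ - g](subrK h); exact: subgroupD.
exact: subgroupB.
Qed.

Lemma cyl_orbit n y y' : exists g, cyl n y' (act g y).
Proof.
have [g yg] := odo_mem y n; have [g' y'g'] := odo_mem y' n.
exists (g' - g) => z /=; rewrite /act_fun (odo_memE y'g') (odo_memE yg).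
by rewrite opprB addrA addrAC addrK.
Qed.

Lemma odo_base_point : is_point Hs Hs.
Proof. by split; [move=> n; exists 0 => z; rewrite subr0 | exact: hHs.2]. Qed.

Definition odo_base : odo Hs := exist _ Hs odo_base_point.

(* [code n y] is the index of the coset representative of [Hs n] lying in [y_n]. *)
Lemma cyl_finite_code : exists (code : nat -> odo Hs -> nat) (B : nat -> nat),
  (forall n y, (code n y < B n)%N) /\ (forall n y y', code n y = code n y' -> cyl n y y').
Proof.
have reps n : {m : nat & {r : 'I_m -> Zd d | forall g, exists i, Hs n (g - r i)}}.
  case/constructive_indefinite_description: (proj1 hHs n).2 => m.
  by case/constructive_indefinite_description => r [_ cover]; exists m, r.
pose B n := projT1 (reps n); pose r n := proj1_sig (projT2 (reps n)).
pose P n (y : odo Hs) k := exists2 i : 'I_(B n), val i = k & proj1_sig y n (r n i).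
have P_ex n y : exists k, P n y k.
  have [g yg] := odo_mem y n; have [i Sgi] := proj2_sig (projT2 (reps n)) g.
  exists i, i => //; apply/(odo_memE yg); rewrite -opprB; exact: subgroupN.
pose code n y := epsilon (inhabits 0%N) (P n y).
have codeP n y : P n y (code n y) by exact: epsilon_spec.
exists code, B; split=> [n y | n y y' eq_code z].
  by have [i <- _] := codeP n y; exact: ltn_ord.
have [i ci yi] := codeP n y; have [i' ci' y'i'] := codeP n y'.
have ii' : i = i' by apply: val_inj; rewrite ci ci'.
by rewrite (odo_memE yi) (odo_memE y'i') ii'.
Qed.

Lemma nested_cyl_limit (R : nat -> odo Hs -> Prop) :
  (forall n y, R n.+1 y -> R n y) -> (forall n, exists y, R n.+1 y) ->
  (forall n y y', R n.+1 y -> R n.+1 y' -> cyl n y y') ->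
  exists ystar : odo Hs, forall n y, R n.+1 y -> cyl n y ystar.
Proof.
move=> R_dec R_ne R_cyl.
pose ys n z := exists2 y, R n.+1 y & proj1_sig y n z.
have ysE n y : R n.+1 y -> forall z, proj1_sig y n z <-> ys n z.
  move=> Ry z; split=> [yz | [y' Ry' y'z]]; first by exists y.
  exact/(R_cyl _ _ _ Ry Ry').
have ys_point : is_point Hs ys.
  split=> [n | n z [y Ry yz]].
    have [y Ry] := R_ne n; have [g yg] := (proj2_sig y).1 n.
    by exists g => z; rewrite -(ysE _ _ Ry).
  by exists y; [exact: R_dec | exact: (proj2_sig y).2].
by exists (exist _ ys ys_point) => n y Ry; exact: ysE.
Qed.

Section Compactness.
Variable good : nat -> odo Hs -> Prop.
Hypotheses (good_le : forall n M y, (n <= M)%N -> good n y -> good M y)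
  (good_cyl : forall n y y', cyl n y y' -> good n y -> good n y')
  (good_ev : forall y, exists n, good n y).

Definition nonuniform (R : odo Hs -> Prop) : Prop :=
  forall M, exists2 y, R y & ~ good M y.

Section Coded.
Variables (code : nat -> odo Hs -> nat) (B : nat -> nat).
Hypotheses (code_lt : forall n y, (code n y < B n)%N)
  (code_cyl : forall n y y', code n y = code n y' -> cyl n y y').

Lemma nonuniform_split R k :
  nonuniform R -> exists c, nonuniform (fun y => R y /\ code k y = c).
Proof.
move=> nuR; apply: NNPP => no_c.
have bound c : exists M, forall y, R y -> code k y = c -> good M y.
  apply: NNPP => no_M; apply: no_c; exists c => M; apply: NNPP => no_y.
  apply: no_M; exists M => y Ry cy; apply: NNPP => ngood; apply: no_y; by exists y.
pose Mc c := proj1_sig (constructive_indefinite_description _ (bound c)).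
have [y Ry ngood] := nuR (\max_(c < B k) Mc c)%N; apply: ngood; apply: good_le.
  exact: (@leq_bigmax _ (fun c : 'I_(B k) => Mc c) (Ordinal (code_lt k y))).
exact: (proj2_sig (constructive_indefinite_description _ (bound (code k y)))).
Qed.

(* König's lemma: descend through code classes that stay nonuniform, which
   exist by [nonuniform_split]. *)
Fixpoint bad_cyls n : odo Hs -> Prop :=
  if n is n'.+1 then fun y => bad_cyls n' y /\ code n' y =
    epsilon (inhabits 0%N) (fun c => nonuniform (fun y => bad_cyls n' y /\ code n' y = c))
  else fun _ => True.

Lemma bad_cyls_nonuniform :
  nonuniform (fun _ => True) -> forall n, nonuniform (bad_cyls n).
Proof.
move=> nuT; elim=> [//|n IH] /=.
exact: (epsilon_spec (inhabits 0%N) _ (nonuniform_split _ IH)).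
Qed.

Lemma uniformly_good_coded : exists N, forall y, good N y.
Proof.
apply: NNPP => no_N.
have nuT : nonuniform (fun _ => True).
  move=> M; apply: NNPP => no_y; apply: no_N; exists M => y.
  by apply: NNPP => ngood; apply: no_y; exists y.
have [ystar ystarP] : exists ystar : odo Hs, forall n y, bad_cyls n.+1 y -> cyl n y ystar.
  apply: nested_cyl_limit => [n y [] // | n | n y y' [_ cy] [_ cy']].
    by have [y] := bad_cyls_nonuniform nuT n.+1 0%N; exists y.
  by apply: code_cyl; rewrite cy cy'.
have [n good_n] := good_ev ystar.
have [y Ry ngood] := bad_cyls_nonuniform nuT n.+1 n.
by apply/ngood/(good_cyl _ good_n) => z; apply: iff_sym; exact: ystarP.
Qed.

End Coded.

Lemma odo_compact : exists N, forall y, good N y.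
Proof.
by have [code [B [lt cy]]] := cyl_finite_code; exact: uniformly_good_coded lt cy.
Qed.

End Compactness.

Lemma locally_constant_uniform (I : finType) (T : Type) (F : I -> odo Hs -> T) :
  (forall i y, exists n, forall z, cyl n y z -> F i z = F i y) ->
  exists N, forall i y z, cyl N y z -> F i z = F i y.
Proof.
move=> loc; pose good n y := forall i z, cyl n y z -> F i z = F i y.
have [N goodN] : exists N, forall y, good N y.
  apply: odo_compact => [n M y nM gy i z yz | n y y' yy' gy i z y'z | y].
  - exact/gy/(cyl_le nM yz).
  - by rewrite (gy i z (fun w => iff_trans (yy' w) (y'z w))) (gy i y' yy').
  pose n i := proj1_sig (constructive_indefinite_description _ (loc i y)).
  exists (\max_i n i)%N => i z yz.
  apply: (proj2_sig (constructive_indefinite_description _ (loc i y))).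
  exact: cyl_le (leq_bigmax i) yz.
by exists N => i y; exact: goodN.
Qed.

End OdometerTopology.

Section OrbitCocycle.
Variables (d : nat) (Gs Hs : nat -> Zd d -> Prop).
Variables (phi : odo Hs -> odo Gs) (f : Zd d -> odo Hs -> Zd d).
Hypotheses (hHs : odo_seq Hs) (freeX : free_action Gs) (freeY : free_action Hs)
  (hphi : cont_orbit_equiv phi)
  (hf : forall h y, act (f h y) (phi y) = phi (act h y)).

Lemma cocycle_eq a y g : act g (phi y) = phi (act a y) -> f a y = g.
Proof. by move=> E; apply: (@act_inj _ _ (phi y) freeX); rewrite /= hf E. Qed.

Lemma cocycle0 y : f 0 y = 0.
Proof. by apply: cocycle_eq; rewrite !act0. Qed.

Lemma cocycleD a b y : f (a + b) y = f a (act b y) + f b y.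
Proof. by apply: cocycle_eq; rewrite -act_add -act_add !hf. Qed.

Lemma cocycleB a b y : f (a - b) y = f a (act (- b) y) - f b (act (- b) y).
Proof.
have -> : f a (act (- b) y) = f (a - b) y + f b (act (- b) y).
  by rewrite -{1}(subrK b a) cocycleD act_add subrr act0.
by rewrite addrK.
Qed.

Lemma cocycle_inj y : injective (fun a => f a y).
Proof.
have [psi [[phiK _ _ _] _]] := hphi.
by move=> a b /= E; apply: (@act_inj _ _ y freeY); apply: (can_inj phiK); rewrite -!hf E.
Qed.

Lemma cocycle_onto y g : exists a, f a y = g.
Proof.
have [psi [_ [orbit _ _]]] := hphi.
have [a E] := (orbit y (act g (phi y))).1 (ex_intro _ g erefl).
by exists a; apply: cocycle_eq.
Qed.

Lemma cocycle_locally_constant a y : exists n, forall z, cyl n y z -> f a z = f a y.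
Proof.
have [psi [_ [_ conj _]]] := hphi.
have [U [[U_open _] Uy [g Ug]]] := conj a y; have [n Un] := U_open y Uy.
exists n => z yz; have Uz : U z := Un z (fun w => iff_sym (yz w)).
by rewrite (cocycle_eq (esym (Ug z Uz))) (cocycle_eq (esym (Ug y Uy))).
Qed.

Lemma cocycle_uniformly_locally_constant :
  exists N, forall a y z, cyl N y z -> f a z = f a y.
Proof.
have [N fN] := locally_constant_uniform hHs
  (F := fun k : 'I_d => f (delta_mx 0 k)) (fun k => cocycle_locally_constant _).
exists N.
apply: (@subgroup_delta_full _ (fun a => forall y z, cyl N y z -> f a z = f a y)).
  split=> [y z _ | a b fa fb y z yz]; first by rewrite !cocycle0.
  by rewrite !cocycleB (fa _ _ (cyl_act _ yz)) (fb _ _ (cyl_act _ yz)).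
exact: fN.
Qed.

Section UniformDepth.
Variable N : nat.
Hypothesis f_unif : forall a y z, cyl N y z -> f a z = f a y.

(* Z^d is abelian: h + a = a + h, and h.y stays in the N-cylinder of y. *)
Lemma cocycle_subgroup_invariant h a y : Hs N h -> f h (act a y) = f h y.
Proof.
move=> Hh; apply: (@addIr _ (f a y)).
rewrite -cocycleD addrC cocycleD (f_unif a (cyl_act_subgroup hHs y Hh)).
by rewrite addrC.
Qed.

Lemma cocycle_subgroup_constant h y y' : Hs N h -> f h y' = f h y.
Proof.
move=> Hh; have [g yg] := cyl_orbit hHs N y y'.
by rewrite -(f_unif h yg) cocycle_subgroup_invariant.
Qed.

Lemma cocycle_addl y s a : Hs N s -> f (s + a) y = f s y + f a y.
Proof. by move=> Hs_s; rewrite cocycleD cocycle_subgroup_invariant. Qed.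

End UniformDepth.

End OrbitCocycle.

Unset Implicit Arguments.

Theorem theorem3p4 (d : nat) (Gs Hs : nat -> Zd d -> Prop)
  (hGs : odo_seq Gs) (hHs : odo_seq Hs)
  (freeX : free_action Gs) (freeY : free_action Hs)
  (phi : odo Hs -> odo Gs) (hphi : cont_orbit_equiv phi)
  (f : Zd d -> odo Hs -> Zd d)
  (hf : forall (h : Zd d) (y : odo Hs), act (f h y) (phi y) = phi (act h y)) :
  exists (G0 H0 : Zd d -> Prop) (n : nat),
    [/\ is_subgroup G0, is_subgroup H0, has_index G0 n, has_index H0 n &
    (exists (q : nat) (C : 'I_q -> odo Hs -> Prop) (theta : 'I_q -> Zd d -> Zd d),
      [/\ (forall i, is_clopen (C i)),
          (forall i, exists y, C i y),
          (forall i j y, C i y -> C j y -> i = j),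
          (forall y, exists i, C i y) &
          (forall i h y, H0 h -> C i y -> C i (act h y))] /\
      [/\
          (forall i, group_iso_on H0 G0 (theta i)) &
          (forall i h y, H0 h -> C i y -> f h y = theta i h)])].
Proof.
have [N f_unif] := cocycle_uniformly_locally_constant hHs freeX hphi hf.
have HN : is_subgroup (Hs N) := (proj1 hHs N).1.
have [m indexN] := (proj1 hHs N).2.
pose y0 := odo_base hHs; pose theta h := f h y0.
have theta_inj : injective theta := cocycle_inj freeY hphi hf (y := y0).
have theta_addl s a : Hs N s -> theta (s + a) = theta s + theta a.
  exact: (cocycle_addl hHs freeX hf f_unif).
exists (image_on (Hs N) theta), (Hs N), m; split=> //.
- exact: image_on_subgroup.
- exact: has_index_image (cocycle_onto freeX hphi hf y0) indexN.
exists 1%N, (fun _ _ => True), (fun _ => theta); split; split=> //.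
- by move=> i; split=> [y _ | y /(_ I) []]; exists 0%N.
- by move=> i j y _ _; rewrite (ord1 i) (ord1 j).
- by move=> y; exists ord0.
- by move=> i; exact: group_iso_on_image.
- by move=> i h y Hh _; exact: (cocycle_subgroup_constant hHs freeX hf f_unif).
Qed.
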